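(* Let $\ell\ge 1$ be a fixed integer and $b>1$ a constant. If $|P_n^\ell|\in O(b^n)$ as $n\to\infty$, then $k_n\ge \dfrac{\ell\log_2 n}{\log_2 b}+O(1)$.
   Context: A system of $k$ stacks in series consists of an input queue, stacks $1,\dots,k$, and an output queue. A state records the contents of each stack and each queue (finitely many distinct labelled elements); there is one additional ''illegal'' state $\varnothing$. The moves are $m_1,\dots,m_{k+1}$: $m_i$ ($1\le i\le k$) pushes an element onto stack $i$, taking it from the front of the input queue if $i=1$ and popping it from the top of stack $i-1$ if $i>1$; $m_{k+1}$ pops the top of stack $k$ and enqueues it at the back of the output queue. For a word $w$ and a state $s$, $w\ast s$ is obtained by applying the moves of $w$ left to right, with $w\ast s=\varnothing$ if some move is illegal and $w\ast\varnothing=\varnothing$. $I(n,k)$ is the state with $1,\dots,n$ in the input queue (front to back) and everything else empty; for $\pi\in S_n$, $t_\pi$ is the state with only the output queue nonempty, containing $\pi(1),\dots,\pi(n)$ front to back. $P_n^k\subseteq S_n$ is the set of $\pi$ such that $w\ast I(n,k)=t_\pi$ for some word $w$. $k_n$ is the smallest integer $k$ with $P_n^k=S_n$. *)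

From Stdlib Require Import Reals ClassicalEpsilon.
From mathcomp Require Import all_boot all_fingroup.

Set Implicit Arguments.
Unset Strict Implicit.
Unset Printing Implicit Defensive.

(* A (legal) state of a system of k stacks in series:
   (input queue, stacks 1..k, output queue).
   - input queue: front of the queue = head of the list;
   - stack i (i = 1..k) is the (i-1)-th list; top of the stack = head;
   - output queue: front = head, back = last element.
   The illegal state (varnothing) is represented by [None : option stk_state]. *)
Definition stk_state := (seq nat * seq (seq nat) * seq nat)%type.

(* Move m_{j+1}, for j = 0..k (so j : 'I_k.+1 encodes m_1 .. m_{k+1}).
   - m_1 (j = 0, if k >= 1): take the front of the input, push on stack 1;
   - m_{j+1} (0 < j < k): pop stack j, push on stack j+1;
   - m_{k+1} (j = k): pop stack k (or the input if k = 0), enqueue at the back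
     of the output. *)
Definition move (k j : nat) (s : stk_state) : option stk_state :=
  let '(inp, st, out) := s in
  let src := if j == 0 then inp else nth [::] st j.-1 in
  match src with
  | [::] => None
  | x :: rest =>
      let inp' := if j == 0 then rest else inp in
      let st' := if j == 0 then st else set_nth [::] st j.-1 rest in
      if j < k then Some (inp', set_nth [::] st' j (x :: nth [::] st' j), out)
      else if j == k then Some (inp', st', rcons out x)
      else None
  end.

Fixpoint act (k : nat) (w : seq 'I_k.+1) (s : option stk_state) : option stk_state :=
  match w with
  | [::] => s
  | j :: w' =>
      act w' (match s with None => None | Some s0 => move k (nat_of_ord j) s0 end)
  end.

Definition init_state (n k : nat) : stk_state := (iota 1 n, nseq k [::], [::]).

(* t_pi, for pi a permutation of {1..n} (encoded as pi : 'S_n acting on 'I_n,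
   with label i+1 for i : 'I_n): only the output queue is nonempty and it
   contains pi(1), ..., pi(n) front to back. *)
Definition target_state (n k : nat) (pi : 'S_n) : stk_state :=
  ([::], nseq k [::], [seq (pi i).+1 | i <- enum 'I_n]).

Definition sortable_by (n k : nat) (pi : 'S_n) : Prop :=
  exists w : seq 'I_k.+1, act w (Some (init_state n k)) = Some (target_state k pi).

Definition pbool (P : Prop) : bool :=
  if excluded_middle_informative P then true else false.

Definition Pnk (n k : nat) : {set 'S_n} := [set pi | pbool (sortable_by k pi)].

Definition is_kn (n k : nat) : Prop :=
  Pnk n k = [set: 'S_n] /\ (forall k', (k' < k)%N -> Pnk n k' <> [set: 'S_n]).

Definition log2 (x : R) : R := ln x / ln 2.

(* Write [transforms k s t] when a system of k stacks in series, fed with the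
   input queue s, can empty everything into the output queue t.  The proof
   rests on three structural facts about this relation:
   - splitting: k1 + k2 stacks in series are k1 stacks followed by k2 stacks,
     so a (k1 + k2)-stack run factors through an intermediate queue u with
     [transforms k1 s u] and [transforms k2 u t];
   - monotonicity: an extra, unused last stack does not hurt;
   - invariance: a run never changes the multiset of labels, and renaming the
     labels commutes with every move.
   Together they give |P_n^(k1+k2)| <= |P_n^k1| * |P_n^k2| and |P_n^k| is
   nondecreasing in k, hence n! = |P_n^(k_n)| <= |P_n^l|^(k_n/l + 1).
   Taking logarithms with ln n! >= n ln n - n and |P_n^l| <= C b^n yields
   k_n >= l ln n / ln b - O(1). *)
From Pilot Require Import Defs.
From Stdlib Require Import Reals Lra.
From mathcomp Require Import all_boot all_fingroup.
From mathcomp Require Import zify.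
Set Implicit Arguments. Unset Strict Implicit.

Lemma set_nth_catl (T : Type) (x0 : T) s1 s2 n y : n < size s1 ->
  set_nth x0 (s1 ++ s2) n y = set_nth x0 s1 n y ++ s2.
Proof. by elim: s1 n => [|a s1 IH] [|n] //= H; rewrite IH. Qed.

Lemma set_nth_catr (T : Type) (x0 : T) s1 s2 n y : size s1 <= n ->
  set_nth x0 (s1 ++ s2) n y = s1 ++ set_nth x0 s2 (n - size s1) y.
Proof. by elim: s1 n => [|a s1 IH] [|n] //= H; rewrite ?subn0 // IH. Qed.

Lemma flatten_nseq_nil (T : Type) k : flatten (nseq k ([::] : seq T)) = [::].
Proof. by elim: k. Qed.

Lemma act_None k (w : seq 'I_k.+1) : Defs.act w None = None.
Proof. by elim: w. Qed.

Lemma act_cat k (w1 w2 : seq 'I_k.+1) s :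
  Defs.act (w1 ++ w2) s = Defs.act w2 (Defs.act w1 s).
Proof. by elim: w1 s => //= j w1 IH s. Qed.

Lemma act_cons k (j : 'I_k.+1) w s :
  Defs.act (j :: w) (Some s) = Defs.act w (move k j s).
Proof. by []. Qed.

Definition content (s : stk_state) : seq nat := s.1.1 ++ flatten s.1.2 ++ s.2.

Lemma count_flatten_set_nth (a : pred nat) st i y :
  count a (flatten (set_nth [::] st i y)) + count a (nth [::] st i)
  = count a y + count a (flatten st).
Proof.
elim: st i => [|z st IH] [|i] /=; rewrite ?count_cat /=.
- by rewrite addn0.
- by rewrite !addn0; elim: i => //=; rewrite cats0.
- lia.
- by have := IH i; lia.
Qed.

(* A move only relocates one label, so it preserves the content up to order. *)
Lemma move_perm k j s s' : move k j s = Some s' -> perm_eq (content s') (content s).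
Proof.
move=> E; apply/seq.permP => a; move: E.
case: s => [[inp st] out]; rewrite /move /content.
case: eqP => [->|j0].
- case: inp => [//|x rest].
  case: ifP => _.
    move=> [<-] /=; rewrite !count_cat /=.
    have := count_flatten_set_nth a st 0 (x :: nth [::] st 0); rewrite /=; lia.
  case: ifP => // _ [<-] /=; rewrite !count_cat -cats1 count_cat /=; lia.
- case E: nth => [//|x rest].
  have H1 := count_flatten_set_nth a st j.-1 rest; rewrite E /= in H1.
  case: ifP => _.
    move=> [<-] /=; rewrite !count_cat /=.
    have := count_flatten_set_nth a (set_nth [::] st j.-1 rest) j
        (x :: nth [::] (set_nth [::] st j.-1 rest) j); rewrite /=; lia.
  case: ifP => // _ [<-] /=; rewrite !count_cat -cats1 count_cat /=; lia.
Qed.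

Lemma act_perm k (w : seq 'I_k.+1) s s' :
  Defs.act w (Some s) = Some s' -> perm_eq (content s') (content s).
Proof.
elim: w s => [|j w IH] s; first by move=> [->].
rewrite act_cons; case E: move => [s1|]; last by rewrite act_None.
by move/IH/perm_trans; apply; apply: move_perm E.
Qed.

Definition smap (f : nat -> nat) (s : stk_state) : stk_state :=
  (map f s.1.1, map (map f) s.1.2, map f s.2).

Lemma nth_map_nil (f : nat -> nat) st i :
  nth [::] (map (map f) st) i = map f (nth [::] st i).
Proof. by elim: st i => [|z st IH] [|i] //=. Qed.

Lemma map_set_nth_nil (f : nat -> nat) st i y :
  map (map f) (set_nth [::] st i y) = set_nth [::] (map (map f) st) i (map f y).
Proof.
elim: st i => [|z st IH] [|i] //=; last by rewrite IH.
by elim: i => //= i ->.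
Qed.

Lemma move_map f k j s : move k j (smap f s) = omap (smap f) (move k j s).
Proof.
case: s => [[inp st] out]; rewrite /move /smap /=.
case: eqP => [->|j0] /=.
- case: inp => [//|x rest] /=.
  case: ifP => _ /=; first by rewrite nth_map_nil map_set_nth_nil.
  by case: ifP => _ //=; rewrite map_rcons.
- rewrite nth_map_nil; case: nth => [//|x rest] /=.
  case: ifP => _ /=; first by rewrite !map_set_nth_nil /= -map_set_nth_nil nth_map_nil.
  by case: ifP => _ //=; rewrite map_rcons map_set_nth_nil.
Qed.

Lemma act_map f k (w : seq 'I_k.+1) s :
  Defs.act w (Some (smap f s)) = omap (smap f) (Defs.act w (Some s)).
Proof.
elim: w s => [|j w IH] s //; rewrite !act_cons move_map.
by case: move => [s1|] /=; rewrite ?IH ?act_None.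
Qed.

(* Appending an empty last stack: a k-stack run is simulated by a
   (k+1)-stack run that uses the new stack only to pass labels through. *)
Definition sext (s : stk_state) : stk_state := (s.1.1, rcons s.1.2 [::], s.2).

Lemma move_ext k j s s' : j <= k -> size s.1.2 = k -> move k j s = Some s' ->
  size s'.1.2 = k /\
  exists w : seq 'I_k.+2, Defs.act w (Some (sext s)) = Some (sext s').
Proof.
case: s => [[inp st] out] /= jle sz.
have Hsrc : (if j == 0 then inp else nth [::] (rcons st [::]) j.-1)
            = (if j == 0 then inp else nth [::] st j.-1).
  case: eqP => // /eqP j0; rewrite -cats1 nth_cat sz.
  by case: (j) j0 jle => //= i _ ->.
rewrite /move; case E: (if j == 0 then inp else _) => [//|x rest].
set st1 := (if j == 0 then st else set_nth [::] st j.-1 rest).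
have Hst : (if j == 0 then rcons st [::] else set_nth [::] (rcons st [::]) j.-1 rest)
           = rcons st1 [::].
  rewrite /st1 -!cats1; case: eqP => // /eqP j0; rewrite set_nth_catl // sz.
  by case: (j) j0 jle {Hsrc E st1}.
have sz1 : size st1 = k.
  rewrite /st1; case: eqP => // /eqP k0; rewrite size_set_nth sz; apply/maxn_idPr.
  by case: (j) k0 jle {Hsrc st1 Hst E}.
case: ltnP => jk.
  (* an inner move is the same move in the larger system *)
  move=> [<-] /=; split; first by rewrite size_set_nth sz1; apply/maxn_idPr.
  exists [:: inord j]; rewrite act_cons inordK; last by rewrite ltnS ltnW.
  rewrite /sext /= /move Hsrc E Hst ltnS (ltnW jk).
  by rewrite -!cats1 set_nth_catl ?nth_cat ?sz1 ?jk.
(* an output move becomes: push on the new stack, then pop it to the output *)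
have jk' : j = k by apply/eqP; rewrite eqn_leq jle jk.
subst j; rewrite eqxx => -[<-] /=; split => //.
exists [:: inord k; inord k.+1]; rewrite !act_cons inordK //.
rewrite /sext /= /move Hsrc E Hst ltnS leqnn inordK //= -cats1 !nth_cat.
rewrite !set_nth_catr sz1 ?ltnn ?subnn //=.
by rewrite nth_cat sz1 ltnn subnn /= eqxx set_nth_catr sz1 // subnn.
Qed.

Lemma act_ext k (w : seq 'I_k.+1) s s' :
  size s.1.2 = k -> Defs.act w (Some s) = Some s' ->
  exists w' : seq 'I_k.+2, Defs.act w' (Some (sext s)) = Some (sext s').
Proof.
elim: w s => [|j w IH] s sz; first by move=> [<-]; exists [::].
rewrite act_cons; case E: move => [s1|]; last by rewrite act_None.
have [sz1 [w1 H1]] := move_ext (ltn_ord j : j <= k) sz E.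
by move=> /(IH _ sz1) [w2 H2]; exists (w1 ++ w2); rewrite act_cat H1.
Qed.

(* Splitting k1 + k2 stacks into a front system (stacks 1..k1) and a back
   system (stacks k1+1..k1+k2).  Each move of the big system is a move of
   exactly one of the two halves, except m_(k1+1), which pops the front
   system into its output and pushes the same label into the back system. *)
Section SplitMove.
Variables (k1 k2 : nat) (inp out : seq nat) (st1 st2 : seq (seq nat)).
Hypotheses (size_st1 : size st1 = k1) (size_st2 : size st2 = k2).

Lemma move_split_front j s' : j < k1 ->
  move (k1 + k2) j (inp, st1 ++ st2, out) = Some s' ->
  exists inp' st1', [/\ s' = (inp', st1' ++ st2, out), size st1' = k1 &
    forall o, move k1 j (inp, st1, o) = Some (inp', st1', o)].
Proof.
move=> jlt; rewrite /move.
have Hsrc : (if j == 0 then inp else nth [::] (st1 ++ st2) j.-1)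
          = (if j == 0 then inp else nth [::] st1 j.-1).
  case: eqP => // /eqP j0; rewrite nth_cat size_st1.
  by case: j j0 jlt => //= j _ jlt; rewrite ltnW.
rewrite Hsrc; case: (if j == 0 then inp else _) => [//|x rest].
set st1' := (if j == 0 then st1 else set_nth [::] st1 j.-1 rest).
have Hst : (if j == 0 then st1 ++ st2 else set_nth [::] (st1 ++ st2) j.-1 rest)
           = st1' ++ st2.
  rewrite /st1'; case: eqP => // /eqP j0; rewrite set_nth_catl // size_st1.
  by case: j j0 jlt {Hsrc st1'} => //= j _ jlt; rewrite ltnW.
have sz1 : size st1' = k1.
  rewrite /st1'; case: eqP => // _; rewrite size_set_nth size_st1; apply/maxn_idPr.
  by case: j jlt {Hsrc st1' Hst} => //= j jlt; rewrite ltnW.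
rewrite Hst (leq_trans jlt (leq_addr _ _)) => -[<-].
exists (if j == 0 then rest else inp), (set_nth [::] st1' j (x :: nth [::] st1' j)).
rewrite set_nth_catl ?nth_cat ?sz1 ?jlt //; split => //.
by rewrite size_set_nth sz1; apply/maxn_idPr.
Qed.

Lemma move_split_handover s' :
  move (k1 + k2) k1 (inp, st1 ++ st2, out) = Some s' ->
  exists x inp' st1' st2' out',
    [/\ s' = (inp', st1' ++ st2', out'), size st1' = k1 /\ size st2' = k2,
        forall o, move k1 k1 (inp, st1, o) = Some (inp', st1', rcons o x) &
        forall i, move k2 0 (x :: i, st2, out) = Some (i, st2', out')].
Proof.
rewrite /move.
have Hsrc : (if k1 == 0 then inp else nth [::] (st1 ++ st2) k1.-1)
          = (if k1 == 0 then inp else nth [::] st1 k1.-1).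
  case: eqP => // /eqP k0; rewrite nth_cat size_st1.
  by case: (k1) k0 => //= i _; rewrite ltnSn.
rewrite Hsrc; case: (if k1 == 0 then inp else _) => [//|x rest].
set st1' := (if k1 == 0 then st1 else set_nth [::] st1 k1.-1 rest).
have Hst : (if k1 == 0 then st1 ++ st2 else set_nth [::] (st1 ++ st2) k1.-1 rest)
           = st1' ++ st2.
  rewrite /st1'; case: eqP => // /eqP k0; rewrite set_nth_catl // size_st1.
  by case: (k1) k0 {Hsrc st1'}.
have sz1 : size st1' = k1.
  rewrite /st1'; case: eqP => // /eqP k0; rewrite size_set_nth size_st1.
  by apply/maxn_idPr; case: (k1) k0 {Hsrc st1' Hst}.
rewrite Hst; case: k2 size_st2 => [|k2'] sz2.
  rewrite addn0 ltnn eqxx => -[<-].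
  by exists x, (if k1 == 0 then rest else inp), st1', st2, (rcons out x).
rewrite -addSnnS leq_addr => -[<-].
exists x, (if k1 == 0 then rest else inp), st1',
  (set_nth [::] st2 0 (x :: nth [::] st2 0)), out.
rewrite set_nth_catr sz1 // subnn nth_cat sz1 ltnn subnn; split => //.
- by split => //; rewrite size_set_nth sz2; apply/maxn_idPr.
- by move=> o; rewrite eqxx.
Qed.

Lemma move_split_back j s' : k1 < j -> j <= k1 + k2 ->
  move (k1 + k2) j (inp, st1 ++ st2, out) = Some s' ->
  exists st2' out', [/\ s' = (inp, st1 ++ st2', out'), size st2' = k2 &
    forall i, move k2 (j - k1) (i, st2, out) = Some (i, st2', out')].
Proof.
move=> jgt jle; rewrite /move.
have j0 : (j == 0) = false by case: j jgt {jle}.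
have jk : (j - k1 == 0) = false by rewrite subn_eq0 leqNgt jgt.
have kj : k1 <= j.-1 by case: j jgt {jle j0 jk}.
have pj : (j - k1).-1 = j.-1 - k1.
  by case: j jgt {jle j0 jk kj} => // j jgt; rewrite subSKn -predn_sub.
rewrite j0 jk nth_cat size_st1 ltnNge kj /= pj.
case: (nth [::] st2 (j.-1 - k1)) => [//|x rest].
rewrite set_nth_catr size_st1 //.
set st2' := set_nth [::] st2 (j.-1 - k1) rest.
have sz2 : size st2' = k2.
  rewrite size_set_nth size_st2; apply/maxn_idPr.
  by case: j jgt jle {j0 jk kj pj st2'} => //= j jgt jle; rewrite ltn_subLR // addnC -ltnS.
have E1 : (j < k1 + k2) = (j - k1 < k2) by rewrite ltn_subLR // ltnW.
have E2 : (j == k1 + k2) = (j - k1 == k2).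
  by apply/eqP/eqP => [->|<-]; rewrite ?addKn // subnKC // ltnW.
rewrite E1 E2; case: ifP => lt2.
  rewrite set_nth_catr size_st1 ?nth_cat ?size_st1 ?ltnNge ?(ltnW jgt) //= => -[<-].
  exists (set_nth [::] st2' (j - k1) (x :: nth [::] st2' (j - k1))), out.
  by split => //; rewrite size_set_nth sz2; apply/maxn_idPr.
by case: ifP => // eq2 [<-]; exists st2', (rcons out x).
Qed.

End SplitMove.

Lemma act_split k1 k2 (w : seq 'I_(k1 + k2).+1) inp st1 st2 out fin :
  size st1 = k1 -> size st2 = k2 ->
  Defs.act w (Some (inp, st1 ++ st2, out)) = Some fin ->
  exists (w1 : seq 'I_k1.+1) (w2 : seq 'I_k2.+1) (u : seq nat), forall o i,
    Defs.act w1 (Some (inp, st1, o)) = Some (fin.1.1, take k1 fin.1.2, o ++ u) /\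
    Defs.act w2 (Some (u ++ i, st2, out)) = Some (i, drop k1 fin.1.2, fin.2).
Proof.
elim: w inp st1 st2 out => [|j w IH] inp st1 st2 out sz1 sz2.
  move=> [<-] /=; exists [::], [::], [::] => o i /=.
  by rewrite cats0 -sz1 take_size_cat // drop_size_cat.
rewrite act_cons; case E: move => [s'|]; last by rewrite act_None.
have jle : j <= k1 + k2 by rewrite -ltnS.
case: (ltngtP j k1) => [jlt|jgt|jeq].
- have [inp' [st1' [-> sz1' Hfront]]] := move_split_front sz1 jlt E.
  move=> /(IH _ _ _ _ sz1' sz2) [w1 [w2 [u H]]].
  exists (inord j :: w1), w2, u => o i; rewrite act_cons inordK; last first.
    by rewrite ltnS ltnW.
  by rewrite Hfront; apply: H.
- have [st2' [out' [-> sz2' Hback]]] := move_split_back sz1 sz2 jgt jle E.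
  move=> /(IH _ _ _ _ sz1 sz2') [w1 [w2 [u H]]].
  exists w1, (inord (j - k1) :: w2), u => o i; rewrite act_cons inordK; last first.
    by rewrite ltnS leq_subLR.
  by rewrite Hback; apply: H.
- move: E; rewrite jeq => /(move_split_handover sz1 sz2).
  move=> [x [inp' [st1' [st2' [out' [-> [sz1' sz2'] Hfront Hback]]]]]].
  move=> /(IH _ _ _ _ sz1' sz2') [w1 [w2 [u H]]].
  exists (ord_max :: w1), (ord0 :: w2), (x :: u) => o i; rewrite !act_cons.
  rewrite (Hfront o : move k1 (@ord_max k1) _ = _).
  rewrite (Hback _ : move k2 (@ord0 k2) _ = _).
  by have [-> ->] := H (rcons o x) i; rewrite -cats1 -catA.
Qed.

Definition transforms (k : nat) (s t : seq nat) : Prop :=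
  exists w : seq 'I_k.+1,
    Defs.act w (Some (s, nseq k [::], [::])) = Some ([::], nseq k [::], t).

Lemma transforms_perm k s t : transforms k s t -> perm_eq s t.
Proof.
move=> [w /act_perm]; rewrite /content /= !flatten_nseq_nil /= cats0.
by rewrite perm_sym.
Qed.

Lemma transforms_map f k s t : transforms k s t -> transforms k (map f s) (map f t).
Proof.
move=> [w H]; exists w; have := act_map f w (s, nseq k [::], [::]).
by rewrite H /smap /= map_nseq.
Qed.

Lemma transforms_succ k s t : transforms k s t -> transforms k.+1 s t.
Proof.
move=> [w /(act_ext (s := (s, nseq k [::], [::])) (size_nseq _ _))] [w' H].
rewrite /transforms.
have -> : nseq k.+1 [::] = rcons (nseq k [::]) ([::] : seq nat).
  by rewrite -cats1 -addn1 nseqD.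
by exists w'.
Qed.

Lemma transforms_add k1 k2 s t :
  transforms (k1 + k2) s t -> exists u, transforms k1 s u /\ transforms k2 u t.
Proof.
move=> [w]; rewrite nseqD => /(act_split (size_nseq k1 _) (size_nseq k2 _)).
move=> [w1 [w2 [u /(_ [::] [::]) /= [H1 H2]]]]; exists u; split.
- by exists w1; rewrite H1 take_size_cat ?size_nseq.
- by exists w2; move: H2; rewrite cats0 drop_size_cat ?size_nseq.
Qed.

Definition outs n (p : 'S_n) : seq nat := [seq (p i).+1 | i <- enum 'I_n].

Lemma outs1 n : outs (1%g : 'S_n) = iota 1 n.
Proof.
rewrite /outs (@eq_map _ _ _ (S \o val)) => [|i]; last by rewrite /= perm1.
rewrite map_comp.
by rewrite val_enum_ord -(iotaDl 1 0) add1n.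
Qed.

Lemma mem_Pnk n k (p : 'S_n) : p \in Pnk n k <-> transforms k (iota 1 n) (outs p).
Proof.
by rewrite inE /pbool; case: ClassicalEpsilon.excluded_middle_informative.
Qed.

Lemma outs_onto n u : perm_eq (iota 1 n) u -> exists p : 'S_n, u = outs p.
Proof.
move=> pe.
have szu : size u = n by rewrite -(perm_size pe) size_iota.
have uu : uniq u by rewrite -(perm_uniq pe) iota_uniq.
have memu i : i < n -> 0 < nth 0 u i /\ (nth 0 u i).-1 < n.
  move=> ilt; have : nth 0 u i \in iota 1 n by rewrite (perm_mem pe) mem_nth ?szu.
  by rewrite mem_iota add1n => /andP[a b]; split => //; rewrite -ltnS prednK.
pose f (i : 'I_n) : 'I_n := Ordinal (proj2 (memu i (ltn_ord i))).
have finj : injective f.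
  move=> i j /(congr1 (S \o val)) /=.
  have [a1 _] := memu _ (ltn_ord i); have [a2 _] := memu _ (ltn_ord j).
  rewrite !prednK // => /eqP; rewrite nth_uniq ?szu // => /eqP.
  exact: val_inj.
exists (perm finj); rewrite /outs.
have -> : [seq ((perm finj) i).+1 | i <- enum 'I_n]
        = [seq nth 0 u (val i) | i <- enum 'I_n].
  apply: eq_map => i; rewrite permE /f /=.
  by rewrite prednK //; case: (memu _ (ltn_ord i)).
by rewrite (map_comp (nth 0 u) val) val_enum_ord -szu -/(mkseq _ _) mkseq_nth.
Qed.

(* Renaming label (s i).+1 into i.+1 turns the pair (t_s, t_p) of output
   queues into (t_1, t_(p s^-1)). *)
Lemma transforms_relabel k n (s p : 'S_n) :
  transforms k (outs s) (outs p) ->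
  transforms k (outs (1%g : 'S_n)) (outs (p * s^-1)%g).
Proof.
pose g x := odflt 0 (omap (fun i : 'I_n => ((s^-1)%g i).+1) (insub x.-1)).
have gE (q : 'S_n) : map g (outs q) = outs (q * s^-1)%g.
  rewrite /outs -map_comp; apply: eq_map => i /=.
  by rewrite /g /= valK /= permM.
by move=> /(transforms_map g); rewrite !gE mulgV.
Qed.

Lemma Pnk_mono n k k' : k <= k' -> Pnk n k \subset Pnk n k'.
Proof.
move=> /subnK <-; elim: (k' - k) => [|d IH]; first by rewrite add0n.
apply: subset_trans IH _; apply/subsetP => p /mem_Pnk p_sorted; apply/mem_Pnk.
by rewrite addSn; apply: transforms_succ.
Qed.

(* Submultiplicativity: every p in P_n^(k1+k2) factors as p = p2 * p1 with
   p1 in P_n^k1 and p2 in P_n^k2. *)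
Lemma Pnk_add n k1 k2 : #|Pnk n (k1 + k2)| <= #|Pnk n k1| * #|Pnk n k2|.
Proof.
rewrite -cardsX; apply: leq_trans (leq_imset_card (fun q => q.2 * q.1)%g _).
apply: subset_leq_card; apply/subsetP => p /mem_Pnk /transforms_add [u [H1 H2]].
have [s Es] := outs_onto (transforms_perm H1); subst u.
apply/imsetP; exists (s, (p * s^-1)%g); last by rewrite /= mulgKV.
rewrite inE /=; apply/andP; split; apply/mem_Pnk => //.
by rewrite -outs1; apply: transforms_relabel.
Qed.

Lemma Pnk_mul n l q : #|Pnk n (q.+1 * l)| <= #|Pnk n l| ^ q.+1.
Proof.
elim: q => [|q IH]; first by rewrite mul1n expn1.
rewrite mulSn expnS; apply: leq_trans (Pnk_add _ _ _) _.
by rewrite leq_mul2l IH orbT.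
Qed.

Lemma fact_le_Pnk_pow n l k : 0 < l -> Pnk n k = [set: 'S_n] ->
  n`! <= #|Pnk n l| ^ (k %/ l).+1.
Proof.
move=> l_gt0 full; rewrite -card_Sn -cardsT -full.
apply: leq_trans (Pnk_mul _ _ _); apply/subset_leq_card/Pnk_mono.
exact/ltnW/ltn_ceil.
Qed.

Local Open Scope R_scope.

Lemma INR_expn (m e : nat) : INR (m ^ e)%N = INR m ^ e.
Proof. by elim: e => [|e IH] //=; rewrite expnS mult_INR IH. Qed.

Lemma ln_le_mono x y : 0 < x -> x <= y -> ln x <= ln y.
Proof. by move=> x0 [xy|<-]; [apply/Rlt_le/ln_increasing | lra]. Qed.

Lemma ln_le_id x : 0 < x -> ln x <= x.
Proof. by move=> x0; have := exp_ineq1_le (ln x); rewrite exp_ln //; lra. Qed.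

Lemma exp_pow x (n : nat) : exp x ^ n = exp (INR n * x).
Proof.
elim: n => [|n IH]; first by rewrite /= Rmult_0_l exp_0.
change (exp x ^ n.+1) with (exp x * exp x ^ n).
by rewrite IH -exp_plus S_INR; f_equal; ring.
Qed.

(* (1 + 1/n)^n <= e, in the form (n + 1)^n <= e n^n. *)
Lemma succ_pow_le n : (INR n + 1) ^ n <= exp 1 * INR n ^ n.
Proof.
case: n => [|n]; first by have := exp_ineq1 1; simpl; lra.
set m := INR n.+1.
have m0 : 0 < m by apply/lt_0_INR/ltP.
have -> : m + 1 = m * (1 + / m) by field; lra.
rewrite Rpow_mult_distr (Rmult_comm (exp 1)).
apply: Rmult_le_compat_l; first by apply: pow_le; lra.
have le_exp : 1 + / m <= exp (/ m) by apply: exp_ineq1_le.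
apply: Rle_trans (pow_incr _ _ n.+1 _) _.
  split; last exact: le_exp.
  have : 0 < / m by apply: Rinv_0_lt_compat.
  lra.
by rewrite exp_pow -/m Rinv_r; lra.
Qed.

Lemma pow_le_exp_fact n : INR n ^ n <= exp (INR n) * INR n`!.
Proof.
elim: n => [|n IH]; first by rewrite /= exp_0; lra.
rewrite factS mult_INR S_INR exp_plus /=.
have n0 : 0 <= INR n by apply: pos_INR.
have e0 := exp_pos 1.
apply: Rle_trans (Rmult_le_compat_l (INR n + 1) _ _ _ (succ_pow_le n)) _; first lra.
have a0 : 0 <= (INR n + 1) * exp 1 by nra.
have := Rmult_le_compat_l _ _ _ a0 IH; lra.
Qed.

Lemma ln_fact_ge n : (0 < n)%N -> INR n * ln (INR n) - INR n <= ln (INR n`!).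
Proof.
move=> n0; have x0 : 0 < INR n by apply/lt_0_INR/ltP.
have := ln_le_mono (pow_lt _ n x0) (pow_le_exp_fact n).
by rewrite ln_pow ?ln_mult ?ln_exp //; [lra | apply: exp_pos | apply/lt_0_INR/ltP/fact_gt0].
Qed.

Lemma ratio_lower_bound x c be Q : 1 <= x -> 0 <= c -> 0 < be ->
  x * ln x - x <= Q * (c + x * be) -> ln x / be - c / (be * be) - / be <= Q.
Proof.
move=> x1 c0 be0 H; set L := ln x.
have Lx : L <= x by apply: ln_le_id; lra.
have cx0 : 0 < c + x * be by nra.
have key : (be * L - c - be) * (c + x * be) <= (be * be * Q) * (c + x * be).
  have : 0 <= c * (c + be * (x - L) + be) by apply: Rmult_le_pos; nra.
  have : be * be * (x * L - x) <= be * be * (Q * (c + x * be)).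
    by apply: Rmult_le_compat_l => //; nra.
  nra.
have {}key : be * L - c - be <= be * be * Q by apply: Rmult_le_reg_r key.
have -> : L / be - c / (be * be) - / be = (be * L - c - be) / (be * be).
  by field; lra.
apply: (Rmult_le_reg_r (be * be)); first nra.
rewrite /Rdiv Rmult_assoc Rinv_l; nra.
Qed.

Lemma ln_fact_le n l k C b : (0 < l)%N -> 1 <= C -> 1 < b ->
  INR #|Pnk n l| <= C * b ^ n -> Pnk n k = [set: 'S_n] ->
  ln (INR n`!) <= INR (k %/ l).+1 * (ln C + INR n * ln b).
Proof.
move=> l0 C1 b1 HC full.
have bn0 : 0 < b ^ n by apply: pow_lt; lra.
have fact_le : INR n`! <= (C * b ^ n) ^ (k %/ l).+1.
  apply: Rle_trans (le_INR _ _ (leP (fact_le_Pnk_pow l0 full))) _.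
  by rewrite INR_expn; apply: pow_incr; split; first exact: pos_INR.
apply: Rle_trans (ln_le_mono _ fact_le) _; first by apply/lt_0_INR/ltP/fact_gt0.
rewrite ln_pow ?ln_mult ?ln_pow; lra || nra.
Qed.

Theorem proposition2 (l : nat) (b : R) :
  (1 <= l)%N -> 1 < b ->
  (exists (C : R) (N : nat), forall n : nat, (N <= n)%N ->
      INR #|Pnk n l| <= C * b ^ n) ->
  exists (D : R) (N : nat), forall n k : nat, (N <= n)%N -> is_kn n k ->
      INR l * log2 (INR n) / log2 b - D <= INR k.
Proof.
move=> l1 b1 [C [N0 HC]].
set C' := Rmax C 1; set c := ln C'; set be := ln b.
have C'1 : 1 <= C' by apply: Rmax_r.
have c0 : 0 <= c by rewrite /c -ln_1; apply: ln_le_mono; lra.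
have be0 : 0 < be by rewrite /be -ln_1; apply: ln_increasing; lra.
have ln2 : 0 < ln 2 by rewrite -ln_1; apply: ln_increasing; lra.
exists (INR l * (c / (be * be) + / be + 1)), (maxn N0 1).
move=> n k; rewrite geq_max => /andP [nN n1] [full _].
have HC' : INR #|Pnk n l| <= C' * b ^ n.
  apply: Rle_trans (HC n nN) _; apply: Rmult_le_compat_r; last exact: Rmax_l.
  by apply: pow_le; lra.
have ln_fact_upper := ln_fact_le l1 C'1 b1 HC' full.
have := ratio_lower_bound (le_INR 1 n (leP n1)) c0 be0
          (Rle_trans _ _ _ (ln_fact_ge n1) ln_fact_upper).
have k_ge : INR l * (INR (k %/ l).+1 - 1) <= INR k.
  by have := le_INR _ _ (leP (leq_divM k l)); rewrite mult_INR S_INR; nra.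
have -> : INR l * log2 (INR n) / log2 b = INR l * (ln (INR n) / be).
  by rewrite /log2 -/be; field; split; lra.
have := pos_INR l; nra.
Qed.
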